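(* Let $(\mathcal{X},\rho)$ be a metric space, $U\subset\mathcal{X}$, and $r>0$. For any process $\mathbb{X}=(X_n)_{n\ge0}$ in $\mathcal{X}$ and any nearest neighbor process $(\tilde X_n)_{n\ge1}$, the number of $(U,r)$-separated events is bounded by the $r$-packing number of $U$: \[\sum_{n=1}^\infty\mathbb{1}\{E_n^{U,r}\text{ occurs}\}\le\mathcal{P}_r(U).\]
   Context: A nearest neighbor process is any $(\tilde X_n)_{n\ge1}$ with $\tilde X_n\in\arg\min_{x\in\{X_0,\dots,X_{n-1}\}}\rho(X_n,x)$. The $r$-separated event at time $n$ is $E_n^r=\{\rho(X_n,\tilde X_n)\ge r\}$, and the $(U,r)$-separated event is $E_n^{U,r}=E_n^r\cap\{X_n\in U\}$. A set $Z$ is an $r$-packing if $\rho(z,z')\ge r$ for all distinct $z,z'\in Z$; $\mathcal{P}_r(U)$ is the maximum size of an $r$-packing contained in $U$ (possibly $+\infty$). *)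

From HB Require Import structures.
From mathcomp Require Import all_boot all_order all_algebra.
From mathcomp Require Import all_classical all_reals all_analysis.
Set Implicit Arguments. Unset Strict Implicit. Unset Printing Implicit Defensive.
Import Order.TTheory GRing.Theory Num.Theory.
Local Open Scope classical_set_scope.
Local Open Scope ring_scope.

Definition is_metric (R : realType) (T : Type) (rho : T -> T -> R) : Prop :=
  (forall x y, 0 <= rho x y) /\
  (forall x y, rho x y = 0 <-> x = y) /\
  (forall x y, rho x y = rho y x) /\
  (forall x y z, rho x z <= rho x y + rho y z).

Definition nn_process (R : realType) (T : Type) (rho : T -> T -> R)
  (X : nat -> T) (Xt : nat -> T) : Prop :=
  forall n, (1 <= n)%N ->
    (exists k, (k < n)%N /\ Xt n = X k) /\
    (forall k, (k < n)%N -> rho (X n) (Xt n) <= rho (X n) (X k)).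

Definition sep_event (R : realType) (T : Type) (rho : T -> T -> R)
  (X Xt : nat -> T) (U : set T) (r : R) (n : nat) : Prop :=
  r <= rho (X n) (Xt n) /\ U (X n).

Definition is_packing (R : realType) (T : Type) (rho : T -> T -> R)
  (U : set T) (r : R) (n : nat) (f : 'I_n -> T) : Prop :=
  injective f /\ (forall i, U (f i)) /\
  (forall i j, i != j -> r <= rho (f i) (f j)).

Definition packing_number (R : realType) (T : Type) (rho : T -> T -> R)
  (U : set T) (r : R) : \bar R :=
  ereal_sup [set (n%:R)%:E | n in [set n : nat | exists f : 'I_n -> T,
                                       is_packing rho U r f]].

From HB Require Import structures.
From mathcomp Require Import all_boot all_order all_algebra.
From mathcomp Require Import all_classical all_reals all_analysis.
Set Implicit Arguments. Unset Strict Implicit. Unset Printing Implicit Defensive.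
Import Order.TTheory GRing.Theory Num.Theory.
Local Open Scope classical_set_scope.
Local Open Scope ring_scope.

(* A point separated at time b is at distance at least r from its nearest
   neighbour, hence from every earlier point. So the points observed at
   separated times are pairwise r-apart, and any N separated times yield an
   r-packing of U of size N; every partial sum of the indicator series is thus
   a lower bound of the packing number. *)

Lemma sumr_indicator (V : pzSemiRingType) (I : Type) (s : seq I) (a : pred I) :
  \sum_(i <- s) (a i)%:R = (count a s)%:R :> V.
Proof.
by rewrite -sum1_count natr_sum [RHS]big_mkcond; apply: eq_bigr => i _; case: (a i).
Qed.

Lemma nneseries_le_ub (R : realType) (u : (\bar R)^nat) (N0 : nat) (M : \bar R) :
  (forall n, (N0 <= n)%N -> (0 <= u n)%E) ->
  (forall N, (\sum_(N0 <= n < N) u n <= M)%E) ->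
  (\sum_(N0 <= n <oo) u n <= M)%E.
Proof.
move=> u_ge0 partial_le; apply: lime_le; last exact: nearW.
by apply: is_cvg_nneseries => n /u_ge0.
Qed.

Lemma separated_injective (R : realType) (T : Type) (rho : T -> T -> R)
    (r : R) (I : eqType) (f : I -> T) :
  (forall x, rho x x = 0) -> 0 < r ->
  (forall i j, i != j -> r <= rho (f i) (f j)) -> injective f.
Proof.
move=> rho0 r_gt0 f_sep i j fij; apply/eqP; apply: contraT => /f_sep.
by rewrite fij rho0 leNgt r_gt0.
Qed.

Lemma packing_number_ge (R : realType) (T : Type) (rho : T -> T -> R)
    (U : set T) (r : R) (n : nat) (f : 'I_n -> T) :
  is_packing rho U r f -> ((n%:R)%:E <= packing_number rho U r)%E.
Proof. by move=> packf; apply: ereal_sup_ubound; exists n => //; exists f. Qed.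

Section SeparatedTimes.
Variables (R : realType) (T : Type) (rho : T -> T -> R).
Variables (U : set T) (r : R) (X Xt : nat -> T).
Hypothesis rho0 : forall x, rho x x = 0.
Hypothesis rho_sym : forall x y, rho x y = rho y x.
Hypothesis r_gt0 : 0 < r.
Hypothesis nn : nn_process rho X Xt.

Local Notation sep := (sep_event rho X Xt U r).

Lemma sep_event_far a b : (a < b)%N -> sep b -> r <= rho (X b) (X a).
Proof.
move=> lt_ab [r_le _]; have [_ nearest] := nn (leq_ltn_trans (leq0n a) lt_ab).
exact: le_trans r_le (nearest _ lt_ab).
Qed.

Lemma sep_times_packing (s : seq nat) :
  uniq s -> {in s, forall n, sep n} ->
  is_packing rho U r (fun i : 'I_(size s) => X (nth 0%N s i)).
Proof.
move=> s_uniq s_sep.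
have sep_nth (i : 'I_(size s)) : sep (nth 0%N s i) by apply/s_sep/mem_nth.
have far (i j : 'I_(size s)) : i != j -> r <= rho (X (nth 0%N s i)) (X (nth 0%N s j)).
  move=> neq_ij; have : nth 0%N s i != nth 0%N s j by rewrite nth_uniq.
  case: ltngtP => // lt_ij _; last exact: sep_event_far.
  by rewrite rho_sym; apply: sep_event_far.
split; first exact: separated_injective rho0 r_gt0 far.
by split=> // i; case: (sep_nth i).
Qed.

End SeparatedTimes.

Theorem lemma4 (R : realType) (T : Type) (rho : T -> T -> R)
  (U : set T) (r : R) (X Xt : nat -> T) :
  is_metric rho -> 0 < r -> nn_process rho X Xt ->
  (\sum_(1 <= n <oo) ((asbool (sep_event rho X Xt U r n))%:R)%:E
     <= packing_number rho U r)%E.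
Proof.
move=> [_ [rho_eq0 [rho_sym _]]] r_gt0 nn.
have rho0 x : rho x x = 0 by apply/rho_eq0.
apply: nneseries_le_ub => [n _ | N]; first by rewrite lee_fin.
rewrite sumEFin sumr_indicator -size_filter.
apply/packing_number_ge/(sep_times_packing rho0 rho_sym r_gt0 nn).
  by rewrite filter_uniq // iota_uniq.
by move=> n; rewrite mem_filter => /andP[/asboolP].
Qed.
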